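(* Let $L$ be a layout. There exists a nested tuple morphism $f$ with $L_f=L$ if and only if $L$ is tractable.
   Context: A nested tuple (of positive integers) is a positive integer or a finite tuple of nested tuples; its flattening $X^\flat$ is the tuple of integer leaves left to right, $\mathrm{len}(X)$ its length and $\mathrm{entry}_i(X)$ its $i$-th entry. Congruent nested tuples share the same nesting pattern. A layout is $L=S:D$ with $S$ (positive entries) and $D$ (nonnegative entries) congruent nested tuples; $L^\flat=S^\flat:D^\flat$. $\langle n\rangle_*=\{*,1,\dots,n\}$. A nested tuple morphism $f:S\to T$ is given by a pointed map $\alpha:\langle\mathrm{len}(S)\rangle_*\to\langle\mathrm{len}(T)\rangle_*$ ($\alpha( * )=*$) such that each $j\ne*$ has at most one preimage and $\mathrm{entry}_i(S)=\mathrm{entry}_{\alpha(i)}(T)$ whenever $\alpha(i)\ne*$. With $T^\flat=(t_1,\dots,t_n)$, the encoded layout $L_f$ has shape $S$ and stride congruent to $S$ whose $i$-th flattened entry is $0$ if $\alpha(i)=*$ and $\prod_{j<\alpha(i)}t_j$ otherwise. Order pairs by $s:d\preceq s':d'$ iff $d<d'$ or ($d=d'$ and $s\le s'$); for a flat layout, $\mathrm{sort}$ stably reorders its modes into $\preceq$-nondecreasing order. A layout $L$ is tractable if, writing $\mathrm{sort}(L^\flat)=(s_1,\dots,s_m):(d_1,\dots,d_m)$, for each $1\le i<m$ either $d_i=0$ or $s_id_i$ divides $d_{i+1}$. *)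

From mathcomp Require Import all_boot.
Set Implicit Arguments. Unset Strict Implicit. Unset Printing Implicit Defensive.

(* Nested tuples: a (natural-number) leaf or a finite tuple of nested tuples.
   Positivity of leaves is imposed separately by [pos_ntuple]. *)
Inductive ntuple : Type :=
| NLeaf of nat
| NNode of seq ntuple.

Fixpoint flat (x : ntuple) : seq nat :=
  match x with
  | NLeaf n => [:: n]
  | NNode xs => flatten (map flat xs)
  end.

Definition len (x : ntuple) : nat := size (flat x).

Fixpoint pattern (x : ntuple) : ntuple :=
  match x with
  | NLeaf _ => NLeaf 0
  | NNode xs => NNode (map pattern xs)
  end.

Definition congruent (x y : ntuple) : Prop := pattern x = pattern y.

Definition pos_ntuple (x : ntuple) : bool := all (fun n => 0 < n) (flat x).

Fixpoint relabel_aux (x : ntuple) (l : seq nat) : ntuple * seq nat :=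
  match x with
  | NLeaf _ => (NLeaf (head 0 l), behead l)
  | NNode xs =>
      let fix go (xs : seq ntuple) (l : seq nat) : seq ntuple * seq nat :=
        match xs with
        | [::] => ([::], l)
        | y :: ys =>
            let (y', l') := relabel_aux y l in
            let (ys', l'') := go ys l' in (y' :: ys', l'')
        end in
      let (xs', l') := go xs l in (NNode xs', l')
  end.

Definition relabel (x : ntuple) (l : seq nat) : ntuple := (relabel_aux x l).1.

Record layout := Layout { lshape : ntuple; lstride : ntuple }.

Definition is_layout (L : layout) : Prop :=
  pos_ntuple (lshape L) /\ congruent (lshape L) (lstride L).

(* nested tuple morphism S -> T given by a pointed map
   <len S>_* -> <len T>_*, encoded as 'I_(len S) -> option 'I_(len T)
   (None = *, indices are 0-based). *)
Definition is_morphism (S T : ntuple) (alpha : 'I_(len S) -> option 'I_(len T)) : Prop :=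
  (forall i j k, alpha i = Some k -> alpha j = Some k -> i = j) /\
  (forall i k, alpha i = Some k -> nth 0 (flat S) i = nth 0 (flat T) k).

Definition enc_stride (S T : ntuple) (alpha : 'I_(len S) -> option 'I_(len T))
  (i : 'I_(len S)) : nat :=
  match alpha i with
  | None => 0
  | Some k => \prod_(t <- take k (flat T)) t
  end.

Definition encoded_layout (S T : ntuple) (alpha : 'I_(len S) -> option 'I_(len T)) : layout :=
  Layout S (relabel S [seq enc_stride alpha i | i : 'I_(len S)]).

(* s:d <= s':d' iff d < d' or (d = d' and s <= s') ; pairs are (s, d) *)
Definition mode_le (a b : nat * nat) : bool :=
  (a.2 < b.2) || ((a.2 == b.2) && (a.1 <= b.1)).

Definition sorted_modes (L : layout) : seq (nat * nat) :=
  sort mode_le (zip (flat (lshape L)) (flat (lstride L))).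

Definition tractable (L : layout) : Prop :=
  let p := sorted_modes L in
  forall i, i.+1 < size p ->
    (nth (0, 0) p i).2 = 0 \/
    ((nth (0, 0) p i).1 * (nth (0, 0) p i).2 %| (nth (0, 0) p i.+1).2).

From mathcomp Require Import all_boot zify.
From Stdlib Require List.

Set Implicit Arguments.
Unset Strict Implicit.
Unset Printing Implicit Defensive.

(* Write P_k = t_0 * ... * t_(k-1) for the prefix products of the flattened
   codomain T.  A morphism gives each mode of S either stride 0 or the mode
   (t_k, P_k) of an entry of T, with distinct entries for distinct modes.  If
   (t_k, P_k) precedes (t_k', P_k') with k <> k', then t_k P_k = P_(k+1)
   divides P_k' (for k' < k the order forces t_k = t_k' = 1), which is
   tractability of the sorted modes.  Conversely, the nonzero-stride modes
   (s_0, d_0) <= ... <= (s_(r-1), d_(r-1)) of a tractable layout form a chain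
   s_i d_i | d_(i+1), and the codomain
     (d_0, s_0, d_1 / (s_0 d_0), s_1, ..., d_(r-1) / (s_(r-2) d_(r-2)), s_(r-1))
   realizes the layout: the i-th of these modes goes to the entry s_i, whose
   prefix product is exactly d_i. *)

Section NtupleInduction.
Variable P : ntuple -> Prop.
Hypothesis P_leaf : forall n, P (NLeaf n).
Hypothesis P_node : forall xs, List.Forall P xs -> P (NNode xs).

Fixpoint ntuple_ind_nested (x : ntuple) : P x :=
  match x with
  | NLeaf n => P_leaf n
  | NNode xs => @P_node xs ((fix all_ind (xs : seq ntuple) : List.Forall P xs :=
       match xs with
       | [::] => List.Forall_nil P
       | y :: ys => @List.Forall_cons _ P y ys (ntuple_ind_nested y) (all_ind ys)
       end) xs)
  end.
End NtupleInduction.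

(* The local fixpoint of [relabel_aux], named so that it can be reasoned about. *)
Fixpoint relabel_seq (xs : seq ntuple) (l : seq nat) : seq ntuple * seq nat :=
  match xs with
  | [::] => ([::], l)
  | y :: ys =>
      let (y', l') := relabel_aux y l in
      let (ys', l'') := relabel_seq ys l' in (y' :: ys', l'')
  end.

Lemma relabel_aux_node xs l :
  relabel_aux (NNode xs) l = let (xs', l') := relabel_seq xs l in (NNode xs', l').
Proof. by []. Qed.

Lemma len_pattern x : len (pattern x) = len x.
Proof.
elim/ntuple_ind_nested: x => [//|xs IH]; rewrite /len /=.
by elim: IH => //= y ys Hy _ IHys; rewrite !size_cat -/(len (pattern y)) Hy IHys.
Qed.

Lemma congruent_len x y : congruent x y -> len x = len y.
Proof. by move=> xy; rewrite -len_pattern xy len_pattern. Qed.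

Lemma relabel_aux_spec x l : len x <= size l ->
  [/\ (relabel_aux x l).2 = drop (len x) l,
      flat (relabel_aux x l).1 = take (len x) l &
      pattern (relabel_aux x l).1 = pattern x].
Proof.
elim/ntuple_ind_nested: x l => [n|xs IH] l; first by case: l => //= a l _; rewrite drop0 take0.
rewrite relabel_aux_node /len /=.
elim: IH l => [|y ys Hy _ IHys] l /=; first by rewrite drop0 take0.
rewrite size_cat => len_l.
have len_y_l : len y <= size l := leq_trans (leq_addr _ _) len_l.
have [Hy_rest Hy_flat Hy_pat] := Hy l len_y_l.
case: (relabel_aux y l) Hy_rest Hy_flat Hy_pat => y' l' /= -> Hy_flat Hy_pat.
have len_rest : size (flatten [seq flat i | i <- ys]) <= size (drop (len y) l).
  by rewrite size_drop leq_subRL.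
have [Hys_rest Hys_flat Hys_pat] := IHys _ len_rest.
case: (relabel_seq ys _) Hys_rest Hys_flat Hys_pat => ys' l'' /= -> -> [->].
by rewrite drop_drop addnC Hy_flat -takeD Hy_pat.
Qed.

Lemma pattern_flat_inj x y : pattern x = pattern y -> flat x = flat y -> x = y.
Proof.
elim/ntuple_ind_nested: x y => [n|xs IH] [m|ys] //=; first by move=> _ [->].
case=> pat_xy flat_xy; congr NNode.
elim: IH ys pat_xy flat_xy => [|x xs' Hx _ IHxs] [|y ys] //= [pat_x pat_xs].
have len_xy : len x = len y by rewrite -len_pattern pat_x len_pattern.
by move/eqP; rewrite eqseq_cat // => /andP[/eqP/(Hx _ pat_x) -> /eqP/(IHxs _ pat_xs) ->].
Qed.

Lemma flat_relabel x l : size l = len x -> flat (relabel x l) = l.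
Proof.
move=> size_l; have [_ -> _] := @relabel_aux_spec x l (eq_leq (esym size_l)).
by rewrite -size_l take_size.
Qed.

Lemma relabel_flat x y : congruent x y -> relabel x (flat y) = y.
Proof.
move=> xy; have size_y : size (flat y) = len x by rewrite (congruent_len xy).
apply: pattern_flat_inj; last exact: flat_relabel.
by have [_ _ ->] := relabel_aux_spec (eq_leq (esym size_y)).
Qed.

Definition prefix_prod (t : seq nat) (k : nat) : nat := \prod_(x <- take k t) x.

Lemma prefix_prodS t k : k < size t -> prefix_prod t k.+1 = prefix_prod t k * nth 0 t k.
Proof. by move=> lt_k; rewrite /prefix_prod (take_nth 0 lt_k) -cats1 big_cat big_seq1. Qed.

Lemma prefix_prod_dvd t k m : k <= m -> prefix_prod t k %| prefix_prod t m.
Proof. by move/subnKC <-; rewrite /prefix_prod takeD big_cat dvdn_mulr. Qed.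

Lemma prefix_prod_gt0 t k : all (fun n => 0 < n) t -> 0 < prefix_prod t k.
Proof.
move=> t_gt0; rewrite /prefix_prod big_seq; apply: prodn_cond_gt0 => x /mem_take.
exact: (allP t_gt0).
Qed.

Lemma mode_le_snd x y : mode_le x y -> x.2 <= y.2.
Proof. by case/orP => [/ltnW | /andP[/eqP -> _]]. Qed.

Lemma prefix_prod_mode_dvd t k k' :
  all (fun n => 0 < n) t -> k < size t -> k != k' ->
  mode_le (nth 0 t k, prefix_prod t k) (nth 0 t k', prefix_prod t k') ->
  nth 0 t k * prefix_prod t k %| prefix_prod t k'.
Proof.
move=> t_gt0 lt_k; case: ltngtP => // [lt_kk' | lt_k'k] _ le_modes.
  by rewrite mulnC -prefix_prodS // prefix_prod_dvd.
have lt_k' : k' < size t := ltn_trans lt_k'k lt_k.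
have tk_gt0 : 0 < nth 0 t k by apply: (allP t_gt0); rewrite mem_nth.
have tk'_gt0 : 0 < nth 0 t k' by apply: (allP t_gt0); rewrite mem_nth.
have p_gt0 := prefix_prod_gt0 k t_gt0.
have p'_gt0 := prefix_prod_gt0 k' t_gt0.
have : prefix_prod t k' * nth 0 t k' <= prefix_prod t k.
  by rewrite -prefix_prodS // dvdn_leq // prefix_prod_dvd.
move: le_modes; rewrite /mode_le /= => /orP[lt_pp' | /andP[/eqP eq_pp' le_tt']] le_pp'.
  by nia.
have tk_eq1 : nth 0 t k = 1 by nia.
by rewrite tk_eq1 mul1n eq_pp'.
Qed.

Lemma mode_le_total : total mode_le.
Proof. by move=> [a b] [c d]; rewrite /mode_le /=; lia. Qed.

Lemma mode_le_trans : transitive mode_le.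
Proof. by move=> [a b] [c d] [e f]; rewrite /mode_le /=; lia. Qed.

Definition stride_dvd (x y : nat * nat) : bool := (x.2 == 0) || (x.1 * x.2 %| y.2).

Definition mode_dvd (x y : nat * nat) : bool := x.1 * x.2 %| y.2.

Lemma tractableP L : tractable L <-> sorted stride_dvd (sorted_modes L).
Proof.
rewrite /tractable; split=> [tr | /(sortedP (0, 0)) sorted_dvd i].
  by apply/(sortedP (0, 0)) => i /tr; rewrite /stride_dvd => -[-> | ->]; rewrite ?orbT.
by move/sorted_dvd/orP => [/eqP|]; [left|right].
Qed.

Definition mode_at (L : layout) (i : nat) : nat * nat :=
  (nth 0 (flat (lshape L)) i, nth 0 (flat (lstride L)) i).

Lemma sorted_modesE L : len (lstride L) = len (lshape L) ->
  sorted_modes L = sort mode_le (mkseq (mode_at L) (len (lshape L))).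
Proof.
move=> len_eq; rewrite /sorted_modes -[flat (lshape L)](mkseq_nth 0).
by rewrite -[flat (lstride L)](mkseq_nth 0) [size (flat (lstride L))]len_eq zip_map.
Qed.

Lemma sorted_sort_mkseq (T : Type) (le r : rel T) (f : nat -> T) n :
  total le ->
  (forall i j, i < n -> j < n -> i != j -> le (f i) (f j) -> r (f i) (f j)) ->
  sorted r (sort le (mkseq f n)).
Proof.
move=> le_total le_r; rewrite sort_map sorted_map.
set q := sort _ _.
have q_sorted : sorted (relpre f le) q by apply: sort_sorted => i j; apply: le_total.
have q_uniq : uniq q by rewrite sort_uniq iota_uniq.
have size_q : size q = n by rewrite size_sort size_iota.
have q_lt i : i < n -> nth 0 q i < n.
  by move=> lt_i; rewrite -[_ < n](mem_iota 0) -(mem_sort (relpre f le)) mem_nth ?size_q.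
apply/(sortedP 0) => i lt_i; apply: le_r.
- by rewrite q_lt // -size_q ltnW.
- by rewrite q_lt // -size_q.
- by rewrite nth_uniq ?(ltnW lt_i) // neq_ltn ltnSn.
- by move/(sortedP 0): q_sorted; apply.
Qed.

(* Zero strides form a prefix of a [mode_le]-sorted list, so dropping them
   keeps the remaining modes consecutive. *)
Lemma sorted_mode_dvd_nonzero p : sorted mode_le p -> sorted stride_dvd p ->
  sorted mode_dvd [seq x <- p | x.2 != 0].
Proof.
elim: p => [//|x p IH] /= le_xp dvd_xp.
have [_ | x2_nz] := eqVneq x.2 0; first exact: IH (path_sorted le_xp) (path_sorted dvd_xp).
have p_nz : all (fun y => y.2 != 0) p.
  move: le_xp; rewrite path_sortedE; last exact: mode_le_trans.
  case/andP => /allP le_x _; apply/allP => y /le_x /mode_le_snd.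
  by rewrite -!lt0n => /(leq_trans _); apply; rewrite lt0n.
rewrite (all_filterP p_nz) /=.
apply: (@sub_in_path _ [pred y | y.2 != 0] stride_dvd) dvd_xp; last by rewrite /= x2_nz.
by move=> y z /negbTE y2_nz _; rewrite /stride_dvd y2_nz.
Qed.

Lemma size_enc_strides S T (alpha : 'I_(len S) -> option 'I_(len T)) :
  size [seq enc_stride alpha i | i : 'I_(len S)] = len S.
Proof. by rewrite size_map size_enum_ord. Qed.

Lemma nth_enc_strides S T (alpha : 'I_(len S) -> option 'I_(len T)) (i : 'I_(len S)) :
  nth 0 [seq enc_stride alpha i | i : 'I_(len S)] i = enc_stride alpha i.
Proof. by rewrite (nth_map i) ?size_enum_ord // nth_ord_enum. Qed.

Lemma encoded_layout_tractable S T (alpha : 'I_(len S) -> option 'I_(len T)) :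
  pos_ntuple T -> is_morphism alpha -> tractable (encoded_layout alpha).
Proof.
move=> T_gt0 [alpha_inj alpha_entry].
have flat_strides : flat (lstride (encoded_layout alpha)) =
    [seq enc_stride alpha i | i : 'I_(len S)] by rewrite flat_relabel ?size_enc_strides.
apply/tractableP; rewrite sorted_modesE; last by rewrite /len flat_strides size_enc_strides.
apply: sorted_sort_mkseq => [|i j lt_i lt_j]; first exact: mode_le_total.
have mode_atE (a : 'I_(len S)) :
    mode_at (encoded_layout alpha) a = (nth 0 (flat S) a, enc_stride alpha a).
  by rewrite /mode_at flat_strides nth_enc_strides.
rewrite -[i]/(val (Ordinal lt_i)) -[j]/(val (Ordinal lt_j)) !mode_atE.
move: (Ordinal lt_i) (Ordinal lt_j) => a b neq_ab.
rewrite /enc_stride /stride_dvd.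
case Ea: (alpha a) => [k|//]; case Eb: (alpha b) => [k'|]; last first.
  by move/mode_le_snd; rewrite leqNgt prefix_prod_gt0.
have neq_kk' : k != k'.
  apply: contra neq_ab => /eqP eq_kk'.
  by rewrite (alpha_inj a b k Ea) // Eb eq_kk'.
rewrite (alpha_entry _ _ Ea) (alpha_entry _ _ Eb) => le_modes.
by apply/orP; right; apply: prefix_prod_mode_dvd.
Qed.

Fixpoint interleave (x0 : nat * nat) (w : seq (nat * nat)) : seq nat :=
  if w is y :: w' then y.2 %/ (x0.1 * x0.2) :: y.1 :: interleave y w' else [::].

Lemma size_interleave x0 w : size (interleave x0 w) = (size w).*2.
Proof. by elim: w x0 => //= y w IH x0; rewrite IH. Qed.

Lemma nth_interleave_odd x0 w j : nth 0 (interleave x0 w) j.*2.+1 = (nth (0, 0) w j).1.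
Proof. by elim: w x0 j => [|y w IH] x0 [|j] //=; rewrite nth_nil. Qed.

Lemma interleave_gt0 x0 w :
  0 < x0.1 * x0.2 -> all (fun y => 0 < y.1 * y.2) w -> path mode_dvd x0 w ->
  all (fun n => 0 < n) (interleave x0 w).
Proof.
elim: w x0 => [//|y w IH] x0 /= x0_gt0 /andP[y_gt0 w_gt0] /andP[x0_dvd_y y_path].
rewrite IH // andbT; move: y_gt0; rewrite muln_gt0 => /andP[-> y2_gt0].
by rewrite divn_gt0 // dvdn_leq.
Qed.

Lemma prefix_prod_interleave x0 w j : path mode_dvd x0 w -> j < size w ->
  x0.1 * x0.2 * prefix_prod (interleave x0 w) j.*2.+1 = (nth (0, 0) w j).2.
Proof.
elim: w x0 j => [//|y w IH] x0 j /= /andP[x0_dvd_y y_path].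
rewrite /prefix_prod; case: j => [_|j lt_j] /=.
  by rewrite big_seq1 mulnC divnK.
rewrite !big_cons -/(prefix_prod (interleave y w) j.*2.+1).
by rewrite mulnA [_ * (_ %/ _)]mulnC divnK // mulnA [y.2 * _]mulnC IH.
Qed.

Lemma path_mode_dvd_unit w : sorted mode_dvd w -> path mode_dvd (1, 1) w.
Proof. by case: w => //= y w ->; rewrite andbT /mode_dvd mul1n dvd1n. Qed.

Lemma flat_leaves s : flat (NNode (map NLeaf s)) = s.
Proof. by elim: s => //= n s ->. Qed.

Section TractableEncoding.
Variables S D : ntuple.
Hypothesis S_gt0 : pos_ntuple S.
Hypothesis S_D : congruent S D.
Hypothesis tractable_SD : tractable (Layout S D).

Let mode := mode_at (Layout S D).

Let active := [seq a <- sort (relpre mode mode_le) (iota 0 (len S)) | (mode a).2 != 0].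

Let T := NNode (map NLeaf (interleave (1, 1) (map mode active))).

Let alpha (a : 'I_(len S)) : option 'I_(len T) := insub (index (a : nat) active).*2.+1.

Lemma mem_active a : (a \in active) = (a < len S) && ((mode a).2 != 0).
Proof. by rewrite mem_filter mem_sort mem_iota andbC. Qed.

Lemma sorted_active_modes : sorted mode_dvd (map mode active).
Proof.
have len_strides : len (lstride (Layout S D)) = len (lshape (Layout S D)).
  exact/esym/congruent_len.
have -> : map mode active =
    [seq x <- map mode (sort (relpre mode mode_le) (iota 0 (len S))) | x.2 != 0].
  by rewrite filter_map.
rewrite -sort_map -/(mkseq _ _) -sorted_modesE //.
apply: sorted_mode_dvd_nonzero; first by apply: sort_sorted; apply: mode_le_total.
exact/tractableP.
Qed.

Lemma flat_T : flat T = interleave (1, 1) (map mode active).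
Proof. exact: flat_leaves. Qed.

Lemma len_T : len T = (size active).*2.
Proof. by rewrite /len flat_T size_interleave size_map. Qed.

Lemma alpha_Some a k :
  alpha a = Some k -> (a : nat) \in active /\ k = (index (a : nat) active).*2.+1 :> nat.
Proof.
rewrite /alpha; case: insubP => // k' lt_k' <- [<-]; split=> //.
by rewrite -index_mem -ltn_Sdouble -len_T.
Qed.

Lemma alpha_None a : alpha a = None -> (a : nat) \notin active.
Proof.
rewrite /alpha; case: insubP => // not_lt _.
by rewrite -index_mem -ltn_Sdouble -len_T.
Qed.

Lemma enc_stride_alpha (a : 'I_(len S)) : enc_stride alpha a = nth 0 (flat D) a.
Proof.
rewrite /enc_stride; case E: (alpha a) => [k|].
  have [a_act k_eq] := alpha_Some E.
  have idx_lt : index (a : nat) active < size (map mode active) by rewrite size_map index_mem.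
  have := prefix_prod_interleave (path_mode_dvd_unit sorted_active_modes) idx_lt.
  by rewrite !mul1n (nth_map 0) -?(size_map mode) // nth_index // k_eq flat_T; apply.
by move: (alpha_None E); rewrite mem_active ltn_ord negbK => /eqP.
Qed.

Lemma is_morphism_alpha : is_morphism alpha.
Proof.
split=> [a b k /alpha_Some[a_act k_a] /alpha_Some[b_act k_b] | a k /alpha_Some[a_act ->]].
  by apply/ord_inj/(index_inj 0 a_act b_act)/double_inj/eq_add_S; rewrite -k_a -k_b.
by rewrite flat_T nth_interleave_odd (nth_map 0) ?index_mem // nth_index.
Qed.

Lemma pos_T : pos_ntuple T.
Proof.
rewrite /pos_ntuple flat_T; apply: interleave_gt0 => //.
  apply/allP => _ /mapP[a a_act ->]; move: a_act; rewrite mem_active => /andP[lt_a d_nz].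
  by rewrite muln_gt0 [0 < (mode a).2]lt0n d_nz andbT; apply: (allP S_gt0); rewrite mem_nth.
exact: path_mode_dvd_unit sorted_active_modes.
Qed.

Lemma encoded_layout_alpha : encoded_layout alpha = Layout S D.
Proof.
rewrite /encoded_layout; congr Layout.
have -> : [seq enc_stride alpha i | i : 'I_(len S)] = flat D.
  apply: (@eq_from_nth _ 0); first by rewrite size_enc_strides (congruent_len S_D).
  move=> i; rewrite size_enc_strides => lt_i.
  by rewrite -[i]/(val (Ordinal lt_i)) nth_enc_strides enc_stride_alpha.
exact: relabel_flat.
Qed.

Lemma tractable_encodable :
  exists (S' T' : ntuple) (alpha' : 'I_(len S') -> option 'I_(len T')),
    [/\ pos_ntuple S', pos_ntuple T', is_morphism alpha' & encoded_layout alpha' = Layout S D].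
Proof.
by exists S, T, alpha; split; [|exact: pos_T|exact: is_morphism_alpha|exact: encoded_layout_alpha].
Qed.

End TractableEncoding.

Theorem mainTheorem9 (L : layout) (HL : is_layout L) :
  (exists (S T : ntuple) (alpha : 'I_(len S) -> option 'I_(len T)),
      [/\ pos_ntuple S, pos_ntuple T, is_morphism alpha &
          encoded_layout alpha = L])
  <-> tractable L.
Proof.
split; first by case=> S [T [alpha [_ T_gt0 alpha_mor <-]]]; exact: encoded_layout_tractable.
by case: L HL => S D [S_gt0 S_D]; apply: tractable_encodable.
Qed.
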